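(* Let $\phi$ satisfy $\phi'(z)\in[\gamma,1]$ for all $z$ ($\gamma\in(0,1]$), let $C_R=10R^2\gamma^{-2}+10$, and suppose $\|x_i\|^2\ge5\gamma^{-2}C_Rn\max_{k\ne i}|\langle x_i,x_k\rangle|$ for all $i\in[n]$. Then for every $W\in\mathbb{R}^{m\times d}$, $$\|\nabla\hat L(W)\|_F\ge\frac{\gamma R_{\min}}{2\sqrt2R\sqrt n}\hat G(W).$$
   Context: Network $f(x;W)=\sum_{j=1}^ma_j\phi(\langle w_j,x\rangle)$, $a_j\in\{\pm1/\sqrt m\}$. Logistic loss $\ell(z)=\log(1+e^{-z})$, $\hat L(W)=\frac1n\sum_i\ell(y_if(x_i;W))$, $\hat G(W)=\frac1n\sum_i1/(1+e^{y_if(x_i;W)})$. $R_{\max}=\max_i\|x_i\|$, $R_{\min}=\min_i\|x_i\|>0$, $R=R_{\max}/R_{\min}$. *)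

From mathcomp Require Import all_boot all_order all_algebra.
From mathcomp Require Import all_classical all_reals all_analysis.
Set Implicit Arguments. Unset Strict Implicit. Unset Printing Implicit Defensive.
Import Order.TTheory GRing.Theory Num.Theory.
Import numFieldNormedType.Exports.
Local Open Scope ring_scope.

Section TwoLayer.
Variable R : realType.

Definition dotv (d : nat) (u v : 'rV[R]_d) : R := \sum_(k < d) u 0 k * v 0 k.
Definition vnorm (d : nat) (u : 'rV[R]_d) : R := Num.sqrt (dotv u u).

Definition netf (m d : nat) (a : 'I_m -> R) (phi : R -> R)
  (W : 'M[R]_(m, d)) (x : 'rV[R]_d) : R :=
  \sum_(j < m) a j * phi (dotv (row j W) x).

Definition logloss (z : R) : R := ln (1 + expR (- z)).

Definition Lhat (n m d : nat) (a : 'I_m -> R) (phi : R -> R)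
  (x : 'I_n -> 'rV[R]_d) (y : 'I_n -> R) (W : 'M[R]_(m, d)) : R :=
  n%:R^-1 * \sum_(i < n) logloss (y i * netf a phi W (x i)).

Definition Ghat (n m d : nat) (a : 'I_m -> R) (phi : R -> R)
  (x : 'I_n -> 'rV[R]_d) (y : 'I_n -> R) (W : 'M[R]_(m, d)) : R :=
  n%:R^-1 * \sum_(i < n) (1 + expR (y i * netf a phi W (x i)))^-1.

Definition gradL (n m d : nat) (a : 'I_m -> R) (phi : R -> R)
  (x : 'I_n -> 'rV[R]_d) (y : 'I_n -> R) (W : 'M[R]_(m, d)) : 'M[R]_(m, d) :=
  \matrix_(j < m, k < d)
     derive1 (fun t : R => Lhat a phi x y (W + t *: delta_mx j k)) 0.

Definition frob (m d : nat) (G : 'M[R]_(m, d)) : R :=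
  Num.sqrt (\sum_(j < m) \sum_(k < d) G j k ^+ 2).

(* R_max = max_i ||x_i||, R_min = min_i ||x_i|| (for n >= 1). *)
Definition Rmax (n d : nat) (x : 'I_n -> 'rV[R]_d) : R :=
  \big[Num.max/0]_(i < n) vnorm (x i).
Definition Rmin (n d : nat) (x : 'I_n -> 'rV[R]_d) : R :=
  \big[Num.min/Rmax x]_(i < n) vnorm (x i).

Definition maxcorr (n d : nat) (x : 'I_n -> 'rV[R]_d) (i : 'I_n) : R :=
  \big[Num.max/0]_(k < n | k != i) `|dotv (x i) (x k)|.

End TwoLayer.

From mathcomp Require Import all_boot all_order all_algebra.
From mathcomp Require Import all_classical all_reals all_analysis.
From mathcomp Require Import ring lra.
Import Order.TTheory GRing.Theory Num.Theory.
Import numFieldNormedType.Exports.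
Set Implicit Arguments. Unset Strict Implicit.
Local Open Scope ring_scope.

(* Row j of the gradient is -(a_j/n) sum_i G_i y_i phi'(<w_j,x_i>) x_i, with
   G_i = 1/(1 + e^{y_i f(x_i)}).  Since the x_i are nearly orthogonal
   (off-diagonal Gram entries are small next to the diagonal), the squared norm
   of such a combination is at least half its diagonal part
   sum_i c_i^2 |x_i|^2 >= gamma^2 R_min^2 sum_i G_i^2.  Summing over the m rows
   (a_j^2 = 1/m) and using Cauchy-Schwarz (sum_i G_i)^2 <= n sum_i G_i^2 gives
   gamma^2 R_min^2 Ghat^2 <= 2 n |grad L|_F^2, which is stronger than the claim
   because R >= 1. *)

Section Calculus.
Variable R : realType.

Lemma eq_is_derive (f g : R -> R) (t0 df : R) :
  f =1 g -> is_derive t0 1 f df -> is_derive t0 1 g df.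
Proof. by move=> /funext ->. Qed.

Lemma dotv_row_addZ_delta d m (W : 'M[R]_(m, d)) j k j' (v : 'rV[R]_d) t :
  dotv (row j' (W + t *: delta_mx j k)) v =
  dotv (row j' W) v + t * ((j' == j)%:R * v 0 k).
Proof.
have delta : (j' == j)%:R * v 0 k = \sum_(i < d) ((j' == j) && (i == k))%:R * v 0 i.
  rewrite (bigD1 k) //= eqxx andbT big1 ?addr0 // => i /negPf ->.
  by rewrite andbF mul0r.
rewrite delta /dotv mulr_sumr -big_split; apply: eq_bigr => i _.
by rewrite !mxE mulrDl mulrA.
Qed.

Lemma is_derive_comp_affine (phi : R -> R) s c : derivable phi s 1 ->
  is_derive (0 : R) 1 (fun t => phi (s + t * c)) (derive1 phi s * c).
Proof.
move=> dphi.
have affine : is_derive (0 : R) 1 (fun t => s + t * c) c.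
  apply: (@eq_is_derive (cst s + c \*: id)) => [t /=|]; first by rewrite mulrC.
  by apply: is_derive_eq; rewrite add0r [_%:A]mulr1.
have := @is_derive1_comp _ phi _ 0 _ _ _ affine.
by rewrite mul0r addr0 derive1E; apply; exact: derivableP.
Qed.

Lemma is_derive_netf_delta m d (a : 'I_m -> R) (phi : R -> R) (W : 'M[R]_(m, d))
    j k (v : 'rV[R]_d) : (forall z, derivable phi z 1) ->
  is_derive (0 : R) 1 (fun t => netf a phi (W + t *: delta_mx j k) v)
    (a j * (derive1 phi (dotv (row j W) v) * v 0 k)).
Proof.
move=> dphi.
apply: (@eq_is_derive (\sum_(j' < m) a j' \*:
    (fun t => phi (dotv (row j' W) v + t * ((j' == j)%:R * v 0 k))))).
  by move=> t; rewrite fct_sumE; apply: eq_bigr => j' _; rewrite dotv_row_addZ_delta.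
apply: is_derive_eq.
  by apply: is_derive_sum => j'; apply: is_deriveZ; exact: is_derive_comp_affine.
rewrite (bigD1 j) //= eqxx mul1r big1 ?addr0 // => j' /negPf ->.
by rewrite mul0r mulr0 scaler0.
Qed.

Lemma is_derive_logloss_comp (u : R -> R) (du : R) : is_derive (0 : R) 1 u du ->
  is_derive (0 : R) 1 (fun t => logloss (u t)) (- (1 + expR (u 0))^-1 * du).
Proof.
move=> hu.
have hexp : is_derive (0 : R) 1 (fun t => 1 + expR (- u t)) (expR (- u 0) * - du).
  apply: (@eq_is_derive (cst 1 + expR \o (- u))) => //.
  by apply: is_derive_eq; rewrite add0r.
have pos : 0 < 1 + expR (- u 0) by rewrite ltr_wpDr // expR_ge0.
have := @is_derive1_comp _ (@ln R) _ 0 _ _ (is_derive1_ln pos) hexp.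
move=> /is_derive_eq; apply.
have e0 : expR (u 0) != 0 by rewrite gt_eqF ?expR_gt0.
have e1 : 1 + expR (u 0) != 0 by rewrite gt_eqF // addr_gt0 ?expR_gt0.
by rewrite expRN; field; rewrite e0 e1.
Qed.

Lemma gradLE n m d (a : 'I_m -> R) (phi : R -> R) (x : 'I_n -> 'rV[R]_d)
    (y : 'I_n -> R) (W : 'M[R]_(m, d)) j k : (forall z, derivable phi z 1) ->
  gradL a phi x y W j k = - (n%:R^-1 * a j) *
    \sum_(i < n) (1 + expR (y i * netf a phi W (x i)))^-1 * y i *
                 derive1 phi (dotv (row j W) (x i)) * x i 0 k.
Proof.
move=> dphi; rewrite /gradL mxE derive1E; apply: derive_val.
apply: (@eq_is_derive (n%:R^-1 \*: \sum_(i < n)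
    (fun t => logloss (y i * netf a phi (W + t *: delta_mx j k) (x i))))).
  by move=> t; rewrite /Lhat fct_sumE.
apply: is_derive_eq.
  apply: is_deriveZ; apply: is_derive_sum => i; apply: is_derive_logloss_comp.
  by apply: is_deriveZ; exact: is_derive_netf_delta.
rewrite /= scale0r addr0 mulNr -mulrA -mulrN mulr_sumr -sumrN.
congr (_ * _); apply: eq_bigr => i _; rewrite /GRing.scale /=; ring.
Qed.

End Calculus.

Section RealInequalities.
Variable R : realFieldType.

Lemma sqr_sum_le_card n (g : 'I_n -> R) :
  (\sum_(i < n) g i) ^+ 2 <= n%:R * \sum_(i < n) g i ^+ 2.
Proof.
have lhsE : (\sum_(i < n) g i) ^+ 2 = \sum_(i < n) \sum_(l < n) g i * g l.
  by rewrite expr2 mulr_suml; apply: eq_bigr => i _; rewrite mulr_sumr.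
have rhsE : n%:R * \sum_(i < n) g i ^+ 2 =
    \sum_(i < n) \sum_(l < n) (g i ^+ 2 + g l ^+ 2) / 2.
  under [RHS]eq_bigr do rewrite -mulr_suml big_split /= sumr_const card_ord.
  rewrite -mulr_suml big_split /= sumr_const card_ord sumrMnl.
  by set Q := \sum_(i < n) _; rewrite -[Q *+ n]mulr_natr; lra.
rewrite lhsE rhsE; apply: ler_sum => i _; apply: ler_sum => l _.
have := sqr_ge0 (g i - g l); nra.
Qed.

(* [2 |ci cl D| <= ci^2 |D| + cl^2 |D|], then bound each [|D|] separately. *)
Lemma cross_term_ge (ci cl D Mi Ml : R) : `|D| <= Mi -> `|D| <= Ml ->
  - (ci ^+ 2 * Mi / 2) - cl ^+ 2 * Ml / 2 <= ci * cl * D.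
Proof.
move=> hMi hMl.
have i_le : ci ^+ 2 * `|D| <= ci ^+ 2 * Mi by rewrite ler_wpM2l ?sqr_ge0.
have l_le : cl ^+ 2 * `|D| <= cl ^+ 2 * Ml by rewrite ler_wpM2l ?sqr_ge0.
have [D_ge0|D_lt0] := lerP 0 D.
  rewrite ger0_norm // in i_le l_le.
  have : 0 <= (ci + cl) ^+ 2 * D by rewrite mulr_ge0 ?sqr_ge0.
  nra.
rewrite ltr0_norm // in i_le l_le.
have : 0 <= (ci - cl) ^+ 2 * - D by rewrite mulr_ge0 ?sqr_ge0 // oppr_ge0 ltW.
nra.
Qed.

End RealInequalities.

Section InnerProduct.
Variable R : realType.
Implicit Types (d n : nat).

Lemma dotvC d (u v : 'rV[R]_d) : dotv u v = dotv v u.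
Proof. by apply: eq_bigr => k _; rewrite mulrC. Qed.

Lemma dotv_ge0 d (v : 'rV[R]_d) : 0 <= dotv v v.
Proof. by apply: sumr_ge0 => k _; rewrite -expr2 sqr_ge0. Qed.

Lemma vnorm_sqr d (v : 'rV[R]_d) : vnorm v ^+ 2 = dotv v v.
Proof. by rewrite sqr_sqrtr // dotv_ge0. Qed.

Lemma sum_sqr_lincombE n d (x : 'I_n -> 'rV[R]_d) (c : 'I_n -> R) :
  \sum_(k < d) (\sum_(i < n) c i * x i 0 k) ^+ 2 =
  \sum_(i < n) \sum_(l < n) c i * c l * dotv (x i) (x l).
Proof.
under eq_bigr do rewrite expr2 mulr_suml.
under eq_bigr do under eq_bigr do rewrite mulr_sumr.
rewrite exchange_big; apply: eq_bigr => i _.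
rewrite exchange_big; apply: eq_bigr => l _.
by rewrite mulr_sumr; apply: eq_bigr => k _; ring.
Qed.

(* Off-diagonal Gram entries are split by [cross_term_ge]; the total error is
   at most [n * \sum_i c_i^2 M_i], a [(1 - e)] fraction of the diagonal. *)
Lemma sum_sqr_lincomb_ge n d (x : 'I_n -> 'rV[R]_d) (M c : 'I_n -> R) (e : R) :
  (forall i, 0 <= M i) ->
  (forall i l, l != i -> `|dotv (x i) (x l)| <= M i) ->
  (forall i, n%:R * M i <= e * dotv (x i) (x i)) ->
  (1 - e) * \sum_(i < n) c i ^+ 2 * dotv (x i) (x i) <=
  \sum_(k < d) (\sum_(i < n) c i * x i 0 k) ^+ 2.
Proof.
move=> M_ge0 M_ge dominant; rewrite sum_sqr_lincombE.
pose A i := c i ^+ 2 * dotv (x i) (x i).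
pose B i := c i ^+ 2 * M i.
have entry_ge i l :
    (l == i)%:R * A i - B i / 2 - B l / 2 <= c i * c l * dotv (x i) (x l).
  have [->|neq_li] := eqVneq l i.
    have : 0 <= B i by rewrite mulr_ge0 ?sqr_ge0.
    by rewrite mul1r /A expr2; lra.
  rewrite mul0r sub0r; apply: cross_term_ge; first exact: M_ge.
  by rewrite dotvC; apply: M_ge; rewrite eq_sym.
have entries_sumE : \sum_(i < n) \sum_(l < n) ((l == i)%:R * A i - B i / 2 - B l / 2) =
    \sum_(i < n) A i - n%:R * \sum_(i < n) B i.
  under eq_bigr => i _.
    rewrite !sumrB (bigD1 i) //= eqxx mul1r big1 => [|l /negPf ->]; last by rewrite mul0r.
    rewrite addr0 sumr_const card_ord -mulr_suml.
  over.
  rewrite !sumrB sumr_const card_ord sumrMnl -mulr_suml.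
  by set SB := \sum_(i < n) B i; rewrite -[SB / 2 *+ n]mulr_natl; lra.
apply: le_trans _ (ler_sum _ (fun i _ => ler_sum _ (fun l _ => entry_ge i l))).
rewrite entries_sumE.
have : n%:R * \sum_(i < n) B i <= e * \sum_(i < n) A i.
  rewrite !mulr_sumr; apply: ler_sum => i _; rewrite /A /B mulrCA [e * _]mulrCA.
  by rewrite ler_wpM2l ?sqr_ge0.
rewrite mulrBl mul1r; lra.
Qed.

Lemma Rmin_le_vnorm n d (x : 'I_n -> 'rV[R]_d) i : Rmin x <= vnorm (x i).
Proof. by rewrite /Rmin (bigD1 i) //= ge_min lexx. Qed.

Lemma Rmin_le_Rmax n d (x : 'I_n -> 'rV[R]_d) : Rmin x <= Rmax x.
Proof.
rewrite /Rmin; elim/big_ind: _ => // [u v hu _|i _]; first by rewrite ge_min hu.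
by rewrite /Rmax (bigD1 i) //= le_max lexx.
Qed.

Lemma maxcorr_ge0 n d (x : 'I_n -> 'rV[R]_d) i : 0 <= maxcorr x i.
Proof. by rewrite /maxcorr; elim/big_ind: _ => // u v hu _; rewrite le_max hu. Qed.

Lemma maxcorr_ge n d (x : 'I_n -> 'rV[R]_d) i l :
  l != i -> `|dotv (x i) (x l)| <= maxcorr x i.
Proof. by move=> neq_li; rewrite /maxcorr (bigD1 l) //= le_max lexx. Qed.

End InnerProduct.

Lemma frob_sqr (R : realType) m d (G : 'M[R]_(m, d)) :
  frob G ^+ 2 = \sum_(j < m) \sum_(k < d) G j k ^+ 2.
Proof. by rewrite sqr_sqrtr // sumr_ge0 // => j _; rewrite sumr_ge0 // => k _; exact: sqr_ge0. Qed.

Section GradientLowerBound.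
Variables (R : realType) (n m d : nat) (a : 'I_m -> R) (phi : R -> R) (gamma : R).
Variables (x : 'I_n -> 'rV[R]_d) (y : 'I_n -> R) (W : 'M[R]_(m, d)).
Hypotheses (n_gt0 : (0 < n)%N) (m_gt0 : (0 < m)%N).
Hypothesis phi_derivable : forall z, derivable phi z 1.
Hypothesis a_sqr : forall j, a j ^+ 2 = m%:R^-1.
Hypothesis y_sqr : forall i, y i ^+ 2 = 1.
Hypothesis gamma_ge0 : 0 <= gamma.
Hypothesis phi'_ge : forall z, gamma <= derive1 phi z.
Hypothesis Rmin_ge0 : 0 <= Rmin x.
Hypothesis x_dominant : forall i, 2 * n%:R * maxcorr x i <= dotv (x i) (x i).

Let G i := (1 + expR (y i * netf a phi W (x i)))^-1.

Lemma gradL_row_sqr_ge j :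
  gamma ^+ 2 * Rmin x ^+ 2 * \sum_(i < n) G i ^+ 2 <=
  2 * m%:R * n%:R ^+ 2 * \sum_(k < d) gradL a phi x y W j k ^+ 2.
Proof.
pose c i := G i * y i * derive1 phi (dotv (row j W) (x i)).
have rowE : m%:R * n%:R ^+ 2 * \sum_(k < d) gradL a phi x y W j k ^+ 2 =
    \sum_(k < d) (\sum_(i < n) c i * x i 0 k) ^+ 2.
  rewrite mulr_sumr; apply: eq_bigr => k _.
  rewrite gradLE // !exprMn sqrrN !exprMn a_sqr exprVn; field.
  by rewrite !pnatr_eq0 -!lt0n m_gt0 n_gt0.
have lincomb_ge := sum_sqr_lincomb_ge c (@maxcorr_ge0 _ _ _ x)
  (@maxcorr_ge _ _ _ x) (e := 1 / 2).
have term_ge i : gamma ^+ 2 * Rmin x ^+ 2 * G i ^+ 2 <= c i ^+ 2 * dotv (x i) (x i).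
  rewrite /c; set p := derive1 phi _; rewrite !exprMn y_sqr mulr1 -vnorm_sqr.
  have p_ge : gamma ^+ 2 <= p ^+ 2.
    by rewrite ler_sqr ?nnegrE ?phi'_ge ?(le_trans gamma_ge0 (phi'_ge _)).
  have x_ge : Rmin x ^+ 2 <= vnorm (x i) ^+ 2.
    by rewrite ler_sqr ?nnegrE ?Rmin_le_vnorm ?sqrtr_ge0.
  rewrite -[X in _ <= X]mulrA [X in _ <= X]mulrC ler_wpM2r ?sqr_ge0 //.
  by apply: ler_pM; rewrite ?sqr_ge0.
have dominant i : n%:R * maxcorr x i <= 1 / 2 * dotv (x i) (x i).
  by have := x_dominant i; have := maxcorr_ge0 x i; lra.
have -> : 2 * m%:R * n%:R ^+ 2 * \sum_(k < d) gradL a phi x y W j k ^+ 2 =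
    2 * \sum_(k < d) (\sum_(i < n) c i * x i 0 k) ^+ 2 by rewrite -rowE; ring.
have diag_ge : gamma ^+ 2 * Rmin x ^+ 2 * \sum_(i < n) G i ^+ 2 <=
    \sum_(i < n) c i ^+ 2 * dotv (x i) (x i).
  by rewrite mulr_sumr; apply: ler_sum => i _; exact: term_ge.
have := lincomb_ge dominant; lra.
Qed.

Lemma Ghat_sqr_le_frob_gradL :
  gamma ^+ 2 * Rmin x ^+ 2 * Ghat a phi x y W ^+ 2 <=
  2 * n%:R * frob (gradL a phi x y W) ^+ 2.
Proof.
set K := gamma ^+ 2 * Rmin x ^+ 2; set F := frob _ ^+ 2.
set Q := \sum_(i < n) G i ^+ 2.
have n_pos : 0 < n%:R :> R by rewrite ltr0n.
have m_pos : 0 < m%:R :> R by rewrite ltr0n.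
have KQ_le : K * Q <= 2 * n%:R ^+ 2 * F.
  have : \sum_(j < m) K * Q <=
      \sum_(j < m) 2 * m%:R * n%:R ^+ 2 * \sum_(k < d) gradL a phi x y W j k ^+ 2.
    by apply: ler_sum => j _; exact: gradL_row_sqr_ge.
  rewrite sumr_const card_ord -mulr_natl -mulr_sumr -frob_sqr -/F; nra.
have Ghat_le : n%:R * Ghat a phi x y W ^+ 2 <= Q.
  have Ghat_nE : n%:R * Ghat a phi x y W ^+ 2 * n%:R = (\sum_(i < n) G i) ^+ 2.
    by rewrite /Ghat; field; rewrite gt_eqF.
  by rewrite -(ler_pM2r n_pos) Ghat_nE mulrC sqr_sum_le_card.
have K_ge0 : 0 <= K by rewrite mulr_ge0 ?sqr_ge0.
set g := Ghat _ _ _ _ _ ^+ 2 in Ghat_le *.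
nra.
Qed.

End GradientLowerBound.

Lemma separation_const_ge2 (R : realFieldType) (gamma r : R) :
  0 < gamma -> gamma <= 1 -> 2 <= 5 / gamma ^+ 2 * (10 * r ^+ 2 / gamma ^+ 2 + 10).
Proof.
move=> gamma_gt0 gamma_le1.
have inv_ge1 : 1 <= (gamma ^+ 2)^-1.
  by rewrite invf_ge1 ?exprn_gt0 // exprn_ile1 // ltW.
have : 0 <= 10 * r ^+ 2 / gamma ^+ 2.
  by apply: divr_ge0; [apply: mulr_ge0 |]; rewrite ?sqr_ge0 ?ler0n.
rewrite mulrC; nra.
Qed.

Lemma div_le_of_sqr_le (R : rcfType) (n : nat) (u r F : R) :
  (0 < n)%N -> 0 <= u -> 1 <= r -> 0 <= F -> u ^+ 2 <= 2 * n%:R * F ^+ 2 ->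
  u / (2 * Num.sqrt 2 * r * Num.sqrt n%:R) <= F.
Proof.
move=> n_gt0 u_ge0 r_ge1 F_ge0 u_le.
have r_gt0 : 0 < r := lt_le_trans ltr01 r_ge1.
have den_gt0 : 0 < 2 * Num.sqrt 2 * r * Num.sqrt n%:R.
  by rewrite !mulr_gt0 ?sqrtr_gt0 ?ltr0n.
have q_ge0 : 0 <= u / (2 * Num.sqrt 2 * r * Num.sqrt n%:R).
  by rewrite divr_ge0 // ltW.
rewrite -ler_sqr ?nnegrE // expr_div_n !exprMn !sqr_sqrtr ?ler0n //.
rewrite ler_pdivrMr ?mulr_gt0 ?exprn_gt0 ?ltr0n //.
have r_sqr_ge1 : 0 <= r ^+ 2 - 1 by rewrite subr_ge0 exprn_ege1.
have nF_ge0 := mulr_ge0 (ler0n R n) (sqr_ge0 F).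
have := mulr_ge0 nF_ge0 r_sqr_ge1; nra.
Qed.

Theorem mainTheorem14 (R : realType) (n m d : nat)
  (a : 'I_m -> R) (phi : R -> R) (gamma : R)
  (x : 'I_n -> 'rV[R]_d) (y : 'I_n -> R) :
  (0 < n)%N -> (0 < m)%N ->
  (forall j, a j = (Num.sqrt m%:R)^-1 \/ a j = - (Num.sqrt m%:R)^-1) ->
  (forall i, y i = 1 \/ y i = -1) ->
  0 < gamma -> gamma <= 1 ->
  (forall z, derivable phi z 1) ->
  (forall z, gamma <= derive1 phi z <= 1) ->
  0 < Rmin x ->
  (let RR := Rmax x / Rmin x in
   let CR := 10 * RR ^+ 2 / gamma ^+ 2 + 10 in
   forall i, vnorm (x i) ^+ 2 >= 5 / gamma ^+ 2 * CR * n%:R * maxcorr x i) ->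
  forall W : 'M[R]_(m, d),
    frob (gradL a phi x y W) >=
      gamma * Rmin x /
        (2 * Num.sqrt 2 * (Rmax x / Rmin x) * Num.sqrt n%:R) * Ghat a phi x y W.
Proof.
move=> n_gt0 m_gt0 ha hy gamma_gt0 gamma_le1 dphi hphi Rmin_gt0 hx W.
have a_sqr j : a j ^+ 2 = m%:R^-1.
  by case: (ha j) => ->; rewrite ?sqrrN exprVn sqr_sqrtr ?ler0n.
have y_sqr i : y i ^+ 2 = 1 by case: (hy i) => ->; rewrite ?sqrrN expr1n.
have x_dominant i : 2 * n%:R * maxcorr x i <= dotv (x i) (x i).
  have := separation_const_ge2 (Rmax x / Rmin x) gamma_gt0 gamma_le1.
  have := mulr_ge0 (ler0n R n) (maxcorr_ge0 x i).
  rewrite -vnorm_sqr; move: (hx i) => /=; nra.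
have Ghat_le := Ghat_sqr_le_frob_gradL W n_gt0 m_gt0 dphi a_sqr y_sqr
  (ltW gamma_gt0) (fun z => proj1 (andP (hphi z))) (ltW Rmin_gt0) x_dominant.
have RR_ge1 : 1 <= Rmax x / Rmin x by rewrite ler_pdivlMr // mul1r Rmin_le_Rmax.
have Ghat_ge0 : 0 <= Ghat a phi x y W.
  by rewrite mulr_ge0 ?invr_ge0 // sumr_ge0 // => i _; rewrite invr_ge0 addr_ge0 ?expR_ge0.
rewrite mulrAC; apply: (div_le_of_sqr_le n_gt0 _ RR_ge1 (sqrtr_ge0 _)).
  by apply: mulr_ge0 => //; apply: mulr_ge0; exact: ltW.
by rewrite -!exprMn in Ghat_le.
Qed.
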